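(* Let $\psi:[0,\infty)\to[0,\infty)$ be convex, nondecreasing, not identically zero, with $\psi(0)=0$; let $\Psi=e^{\psi}-1$ and, for $L>0$, $\Psi(z;L)=\exp\big(\frac{2}{L^2}\psi(Lz)\big)-1$. Let $Z_1,\dots,Z_m$ be random variables with $\tau\equiv\max_{1\le j\le m}\|Z_j\|_{\Psi}<\infty$. Then $$\Big\|\Big(\max_{1\le j\le m}|Z_j|-\tau\,\Psi^{-1}(m)\Big)_+\Big\|_{\Psi(\cdot;\sqrt6)}\le\sqrt6\,\tau.$$
   Context: For $y>0$, $\Psi^{-1}(y)$ is the unique $x\ge0$ with $\Psi(x)=y$ (so $\Psi^{-1}(m)=\psi^{-1}(\log(1+m))$). The Orlicz norm is $\|X\|_{\Psi}=\inf\{c>0:E\Psi(|X|/c)\le1\}$; $(a)_+=\max(a,0)$. *)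

From HB Require Import structures.
From mathcomp Require Import all_boot all_order all_algebra.
From mathcomp Require Import all_classical all_reals all_analysis.
Set Implicit Arguments. Unset Strict Implicit. Unset Printing Implicit Defensive.
Import Order.TTheory GRing.Theory Num.Theory.
Local Open Scope ring_scope.
Local Open Scope classical_set_scope.

Definition PsiF (R : realType) (psi : R -> R) (x : R) : R := expR (psi x) - 1.

Definition PsiL (R : realType) (psi : R -> R) (L : R) (z : R) : R :=
  expR (2 / L ^+ 2 * psi (L * z)) - 1.

Definition Psi_inv (R : realType) (psi : R -> R) (y : R) : R :=
  xget 0 [set x : R | 0 <= x /\ PsiF psi x = y].

(* Orlicz norm ||X||_Phi = inf {c > 0 : E Phi(|X|/c) <= 1}, valued in \bar R
   (inf of the empty set is +oo). *)
Definition orlicz_norm d (T : measurableType d) (R : realType)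
  (P : probability T R) (Phi : R -> R) (X : T -> R) : \bar R :=
  ereal_inf [set c%:E | c in [set c : R | 0 < c /\
     (\int[P]_x (Phi (`|X x| / c))%:E <= 1)%E]].

From HB Require Import structures.
From mathcomp Require Import all_boot all_order all_algebra.
From mathcomp Require Import all_classical all_reals all_analysis.
From mathcomp Require Import measurable_realfun ring lra.
Import Order.TTheory GRing.Theory Num.Theory.
Import numFieldNormedType.Exports.
Local Open Scope ring_scope.
Local Open Scope classical_set_scope.

(* Fix c > tau, let u = Psi^-1(m) and v = (tau / c) u, so that tau u = c v.
   Superadditivity of the convex function psi gives, with M = max_j |Z_j|,
     psi ((M - tau u)_+ / c) + psi v <= psi (M / c),
   hence exp psi ((M - tau u)_+ / c) - 1 <= e^-psi(v) sum_j exp psi (|Z_j| / c),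
   whose expectation is at most 2 m e^-psi(v) because c > tau.  Rescaling by
   L (psi (z / k) <= psi z / k and convexity of exp) turns this into
     E Psi((M - tau u)_+ / (L c); L) <= 4 m e^-psi(v) / L^2,
   which is at most 1 as soon as psi v is close enough to psi u = log (1 + m),
   i.e. as soon as c is close enough to tau.  This works for every L > 2. *)

Set Implicit Arguments.
Unset Strict Implicit.

Lemma expR_mul_sub1_le (R : realType) (a b : R) : 0 <= a <= 1 ->
  expR (a * b) - 1 <= a * (expR b - 1).
Proof.
move=> /andP[a0 a1]; have := convex_expR (Itv01 a0 a1) b 0.
by rewrite !convR_line_path /line_path /= expR0 mulr0 add0r; lra.
Qed.

Lemma lipschitz_within_continuous (R : realType) (A : set R) (f : R -> R) K :
  0 < K -> (forall x y, A x -> A y -> `|f x - f y| <= K * `|x - y|) ->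
  {within A, continuous f}.
Proof.
move=> K0 fK; apply/subspace_continuousP => x Ax.
apply/cvgrPdist_lt => e e0; rewrite near_withinE.
near=> y => Ay; apply: le_lt_trans (fK x y Ax Ay) _.
rewrite -ltr_pdivlMl //; near: y.
by apply: cvgr_dist_lt => //; rewrite mulr_gt0 ?invr_gt0.
Unshelve. all: by end_near.
Qed.

Section convex_psi.
Variables (R : realType) (psi : R -> R).
Hypothesis psi0 : psi 0 = 0.
Hypothesis psi_ge0 : forall x, 0 <= x -> 0 <= psi x.
Hypothesis psi_nd : forall x y, 0 <= x -> x <= y -> psi x <= psi y.
Hypothesis psi_cvx : forall x y t, 0 <= x -> 0 <= y -> 0 <= t <= 1 ->
  psi (t * x + (1 - t) * y) <= t * psi x + (1 - t) * psi y.

Lemma psi_scale_le t x : 0 <= t <= 1 -> 0 <= x -> psi (t * x) <= t * psi x.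
Proof.
move=> t01 x0; have := psi_cvx x0 (lexx 0) t01.
by rewrite !mulr0 !addr0 psi0 mulr0 addr0.
Qed.

Lemma psi_superadditive a b : 0 <= a -> 0 <= b -> psi a + psi b <= psi (a + b).
Proof.
move=> a0 b0; have [ab0|ab_gt0] := eqVneq (a + b) 0.
  have a00 : a = 0 by lra.
  have b00 : b = 0 by lra.
  by rewrite a00 b00 !addr0 psi0 addr0.
have {}ab_gt0 : 0 < a + b by rewrite lt_def ab_gt0 addr_ge0.
have t01 z : 0 <= z <= a + b -> 0 <= z / (a + b) <= 1.
  by case/andP=> z0 zab; rewrite divr_ge0 ?ler_pdivrMr //=; lra.
have := psi_scale_le (t01 a ltac:(lra)) (ltW ab_gt0).
have := psi_scale_le (t01 b ltac:(lra)) (ltW ab_gt0).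
rewrite !divfK ?gt_eqF // => pb pa.
by have := lerD pa pb; rewrite -!mulrDl divff ?gt_eqF // mul1r.
Qed.

Lemma psi_superadditive_natr n x : 0 <= x -> n%:R * psi x <= psi (n%:R * x).
Proof.
move=> x0; elim: n => [|n IH]; first by rewrite !mul0r psi0.
rewrite -natr1 !mulrDl !mul1r.
by apply: le_trans (psi_superadditive (mulr_ge0 (ler0n _ n) x0) x0); lra.
Qed.

Lemma psi_scale_ge s u : 0 <= s <= 1 -> 0 <= u ->
  psi u - (1 - s) * (psi (2 * u) - psi u) <= psi (s * u).
Proof.
move=> /andP[s0 s1] u0; set l := (2 - s)^-1.
have l01 : 0 <= l <= 1 by rewrite invr_ge0 invf_le1; lra.
have u2 : 0 <= 2 * u by lra.
have s2 : 0 <= 2 - s by lra.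
have := psi_cvx (mulr_ge0 s0 u0) u2 l01.
have -> : l * (s * u) + (1 - l) * (2 * u) = u by rewrite /l; field; lra.
move=> /(ler_wpM2l s2).
have -> : (2 - s) * (l * psi (s * u) + (1 - l) * psi (2 * u)) =
          psi (s * u) + (1 - s) * psi (2 * u) by rewrite /l; field; lra.
lra.
Qed.

Lemma psi_increment_le B a b : 0 <= a -> a <= b -> b <= B ->
  psi b - psi a <= psi (B + 1) * (b - a).
Proof.
move=> a0 ab bB; set l := (b - a) / (B + 1 - a).
have l01 : 0 <= l <= 1 by rewrite divr_ge0 ?ler_pdivrMr; lra.
have l_le : l <= b - a by rewrite ler_pdivrMr; nra.
have B1 : 0 <= B + 1 by lra.
have := psi_cvx B1 a0 l01.
have -> : l * (B + 1) + (1 - l) * a = b by rewrite /l; field; lra.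
by have := psi_ge0 a0; have := psi_ge0 B1; nra.
Qed.

Lemma psi_within_continuous B : 0 <= B -> {within `[0, B], continuous psi}.
Proof.
move=> B0; have pB : 0 <= psi (B + 1) by apply: psi_ge0; lra.
apply: (@lipschitz_within_continuous _ _ _ (psi (B + 1) + 1)) => [|x y].
  lra.
wlog xy : x y / x <= y => [hw|].
  by have [/hw//|/ltW/hw h yB xB] := leP x y; rewrite distrC [`|x - y|]distrC h.
rewrite /= !in_itv /= => /andP[x0 xB] /andP[y0 yB].
rewrite distrC [`|x - y|]distrC !ger0_norm ?subr_ge0 ?psi_nd //.
by have := psi_increment_le x0 xy yB; nra.
Qed.

Lemma PsiL_div_le L k z : 0 < L -> 1 <= k -> 2 <= L ^+ 2 * k -> 0 <= z ->
  PsiL psi L (z / (L * k)) <= 2 / (L ^+ 2 * k) * (expR (psi z) - 1).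
Proof.
move=> L0 k1 Lk z0; have k0 : 0 < k by lra.
have Lk0 : 0 < L ^+ 2 * k by lra.
have a01 : 0 <= 2 / (L ^+ 2 * k) <= 1 by rewrite divr_ge0 ?ler_pdivrMr //; lra.
apply: le_trans (expR_mul_sub1_le _ a01); rewrite /PsiL lerD2r ler_expR.
have -> : L * (z / (L * k)) = k^-1 * z by field; rewrite !gt_eqF.
have k01 : 0 <= k^-1 <= 1 by rewrite invr_ge0 invf_le1; lra.
have -> : 2 / (L ^+ 2 * k) * psi z = 2 / L ^+ 2 * (k^-1 * psi z).
  by field; rewrite !gt_eqF // exprn_gt0.
by rewrite ler_wpM2l ?psi_scale_le // divr_ge0 // sqr_ge0.
Qed.

Lemma expR_psi_excess_le m (f : 'I_m -> R) c v : (0 < m)%N ->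
  (forall j, 0 <= f j) -> 0 < c -> 0 <= v ->
  expR (psi (Order.max (\big[Order.max/0]_(j < m) f j - c * v) 0 / c)) - 1
  <= expR (- psi v) * \sum_(j < m) expR (psi (f j / c)).
Proof.
move=> m0 f0 c0 v0; set M := \big[Order.max/0]_(j < m) f j.
have sum_ge0 : 0 <= \sum_(j < m) expR (psi (f j / c)).
  by apply: sumr_ge0 => j _; exact: expR_ge0.
(* [leP] also rewrites the [Order.max] in the goal. *)
have [Mcv|cvM] := leP (M - c * v) 0.
  by rewrite mul0r psi0 expR0 subrr mulr_ge0 ?expR_ge0.
have [j _ Mj] := eq_bigmax (Ordinal m0) xpredT f isT (fun i _ => f0 i).
have Mcv_ge0 : 0 <= (M - c * v) / c by rewrite divr_ge0 ?ltW.
have := psi_superadditive Mcv_ge0 v0.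
have -> : (M - c * v) / c + v = f j / c.
  by rewrite -Mj mulrBl mulrAC divff ?gt_eqF // mul1r subrK.
move=> super.
have : expR (psi ((M - c * v) / c)) <= expR (- psi v) * expR (psi (f j / c)).
  by rewrite -expRD ler_expR; lra.
have : expR (psi (f j / c)) <= \sum_(i < m) expR (psi (f i / c)).
  by rewrite (bigD1 j) //= lerDl sumr_ge0 // => i _; exact: expR_ge0.
move=> /(ler_wpM2l (expR_ge0 (- psi v))); lra.
Qed.

Lemma psi_scale_ge_near1 u t e δ : 0 <= u -> 0 < t -> 0 < e -> 0 < δ ->
  exists2 c, t < c <= t + e & psi u - δ <= psi (t / c * u).
Proof.
move=> u0 t0 e0 δ0; set K := psi (2 * u) - psi u.
have K0 : 0 <= K by rewrite subr_ge0 psi_nd //; lra.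
set dl := Order.min e (t * δ / (K + 1)).
have dl0 : 0 < dl by rewrite lt_min e0 divr_gt0 ?mulr_gt0 //; lra.
have dle : dl <= e by rewrite ge_min lexx.
have dlK : dl * K <= t * δ.
  have : dl <= t * δ / (K + 1) by rewrite ge_min lexx orbT.
  by rewrite ler_pdivlMr; nra.
exists (t + dl); first by apply/andP; split; lra.
have s01 : 0 <= t / (t + dl) <= 1 by rewrite divr_ge0 ?ler_pdivrMr /=; lra.
apply: le_trans (psi_scale_ge s01 u0); rewrite lerD2l lerN2.
have -> : 1 - t / (t + dl) = dl / (t + dl) by field; lra.
rewrite mulrAC ler_pdivrMr -/K; last lra.
by have := mulr_ge0 (ltW δ0) (ltW dl0); lra.
Qed.

Hypothesis psi_nz : exists x, 0 <= x /\ psi x != 0.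

Lemma psi_onto l : 0 <= l -> exists2 x, 0 <= x & psi x = l.
Proof.
move=> l0; case: psi_nz => x1 [x10 px1].
have px1_gt0 : 0 < psi x1 by rewrite lt_def px1 psi_ge0.
set B := (Num.truncn (l / psi x1)).+1%:R * x1.
have B0 : 0 <= B by rewrite mulr_ge0.
have lB : l <= psi B.
  apply: le_trans (psi_superadditive_natr _ x10); rewrite -ler_pdivrMr //.
  exact/ltW/truncnS_gt.
have [|x] := IVT B0 (psi_within_continuous B0) (v := l).
  by rewrite psi0 (min_l (psi_ge0 B0)) (max_r (psi_ge0 B0)) l0.
by rewrite in_itv /= => /andP[x0 _] <-; exists x.
Qed.

Lemma Psi_invP y : 0 <= y ->
  0 <= Psi_inv psi y /\ expR (psi (Psi_inv psi y)) = 1 + y.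
Proof.
move=> y0; have y1 : 1 <= 1 + y by lra.
have [x x0 px] := psi_onto (ln_ge0 y1).
have : exists x, [set x | 0 <= x /\ PsiF psi x = y] x.
  by exists x; split => //; rewrite /PsiF px lnK ?posrE; lra.
by move=> /(xgetPex 0) [u0]; rewrite /PsiF => Pu; split => //; lra.
Qed.

End convex_psi.

Section orlicz.
Context d (T : measurableType d) (R : realType) (P : probability T R).

Lemma measurable_fun_nondecreasing_comp (f : R -> R) (h : T -> R) :
  (forall x y, 0 <= x -> x <= y -> f x <= f y) ->
  measurable_fun setT h -> (forall t, 0 <= h t) ->
  measurable_fun setT (fun t => f (h t)).
Proof.
move=> f_nd mh h0.
have -> : (fun t => f (h t)) = (f \o Order.max 0) \o h.
  by apply/funext => t /=; rewrite max_r.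
apply: measurableT_comp => //; apply: nondecreasing_measurable => // a b ab.
by apply: f_nd; [rewrite le_max lexx | exact: le_max2].
Qed.

Lemma measurable_fun_normr_div (X : T -> R) c :
  measurable_fun setT X -> measurable_fun setT (fun t => `|X t| / c).
Proof.
move=> mX; apply: measurable_funM; last exact: measurable_cst.
exact: measurableT_comp.
Qed.

Lemma measurable_bigmax (I : eqType) (s : seq I) (F : I -> T -> R) :
  (forall i, measurable_fun setT (F i)) ->
  measurable_fun setT (fun t => \big[Order.max/0]_(i <- s) F i t).
Proof.
move=> mF; elim: s => [|i s IH].
  by under eq_fun do rewrite big_nil; exact: measurable_cst.
by under eq_fun do rewrite big_cons; exact: measurable_maxr.
Qed.

Lemma orlicz_norm_le (Phi : R -> R) (X : T -> R) c : 0 < c ->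
  (\int[P]_t (Phi (`|X t| / c))%:E <= 1)%E -> (orlicz_norm P Phi X <= c%:E)%E.
Proof. by move=> c0 h; apply: ereal_inf_lbound; exists c. Qed.

Variable Phi : R -> R.
Hypothesis Phi_nd : forall x y, 0 <= x -> x <= y -> Phi x <= Phi y.
Hypothesis Phi_ge0 : forall x, 0 <= x -> 0 <= Phi x.

Lemma orlicz_norm_lt_integral_le1 (X : T -> R) c :
  measurable_fun setT X -> 0 < c -> (orlicz_norm P Phi X < c%:E)%E ->
  (\int[P]_t (Phi (`|X t| / c))%:E <= 1)%E.
Proof.
move=> mX c0 /ereal_inf_lt [_ [c' [c'0 hc'] <-]]; rewrite lte_fin => c'c.
have mPhi e : 0 <= e -> measurable_fun setT (fun t => (Phi (`|X t| / e))%:E).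
  move=> e0; apply/measurable_EFinP.
  apply: (measurable_fun_nondecreasing_comp Phi_nd).
    exact: measurable_fun_normr_div.
  by move=> t; rewrite divr_ge0.
apply: le_trans hc'; apply: ge0_le_integral => //.
- by move=> t _; rewrite lee_fin Phi_ge0 // divr_ge0 // ltW.
- exact/mPhi/ltW.
- exact/mPhi/ltW.
- move=> t _; rewrite lee_fin; apply: Phi_nd; first by rewrite divr_ge0 // ltW.
  by rewrite ler_wpM2l // lef_pV2 ?posrE // ltW.
Qed.

End orlicz.

Section max_excess.
Context d (T : measurableType d) (R : realType) (P : probability T R).
Variable psi : R -> R.
Hypothesis psi0 : psi 0 = 0.
Hypothesis psi_ge0 : forall x, 0 <= x -> 0 <= psi x.
Hypothesis psi_nd : forall x y, 0 <= x -> x <= y -> psi x <= psi y.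
Hypothesis psi_cvx : forall x y t, 0 <= x -> 0 <= y -> 0 <= t <= 1 ->
  psi (t * x + (1 - t) * y) <= t * psi x + (1 - t) * psi y.
Variables (m : nat) (Z : 'I_m -> {RV P >-> R}) (L : R).
Hypothesis m_gt0 : (0 < m)%N.
Hypothesis L_gt2 : 2 < L.

Let excess w t := Order.max ((\big[Order.max/0]_(j < m) `|Z j t|) - w) 0.

Let PsiF_nd x y : 0 <= x -> x <= y -> PsiF psi x <= PsiF psi y.
Proof. by move=> x0 xy; rewrite lerD2r ler_expR psi_nd. Qed.

Let PsiF_ge0 x : 0 <= x -> 0 <= PsiF psi x.
Proof. by move=> x0; rewrite subr_ge0 -expR0 ler_expR psi_ge0. Qed.

Let expR_psi_nd x y : 0 <= x -> x <= y -> expR (psi x) <= expR (psi y).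
Proof. by move=> x0 xy; rewrite ler_expR psi_nd. Qed.

Let L_gt0 : 0 < L. Proof. exact: lt_trans L_gt2. Qed.

Let L2_gt4 : 4 < L ^+ 2.
Proof. by have := L_gt2; have := L_gt0; rewrite expr2; nra. Qed.

Let PsiL_nd x y : 0 <= x -> x <= y -> PsiL psi L x <= PsiL psi L y.
Proof.
move=> x0 xy; rewrite lerD2r ler_expR ler_wpM2l ?divr_ge0 ?sqr_ge0 //.
by rewrite psi_nd ?mulr_ge0 ?ler_wpM2l // ltW.
Qed.

Let PsiL_ge0 x : 0 <= x -> 0 <= PsiL psi L x.
Proof.
move=> x0; rewrite subr_ge0 -expR0 ler_expR mulr_ge0 ?divr_ge0 ?sqr_ge0 //.
by rewrite psi_ge0 ?mulr_ge0 // ltW.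
Qed.

Let integral_PsiF_Z_le1 j c : 0 < c ->
  (orlicz_norm P (PsiF psi) (Z j) < c%:E)%E ->
  (\int[P]_t (PsiF psi (`|Z j t| / c))%:E <= 1)%E.
Proof.
move=> c0; apply: (orlicz_norm_lt_integral_le1 PsiF_nd PsiF_ge0 _ c0).
exact: measurable_funPT.
Qed.

Lemma integral_expR_psi_le (X : T -> R) c : measurable_fun setT X -> 0 < c ->
  (\int[P]_t (PsiF psi (`|X t| / c))%:E <= 1)%E ->
  (\int[P]_t (expR (psi (`|X t| / c)))%:E <= 2%:E)%E.
Proof.
move=> mX c0 hX; have Xc0 t : 0 <= `|X t| / c by rewrite divr_ge0 // ltW.
under eq_integral do rewrite -[expR _](subrK 1) EFinD.
rewrite ge0_integralD //.
- rewrite integral_cst // [X in (_ * X)%E](_ : _ = 1%E); last first.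
    exact: probability_setT.
  by rewrite mul1e; apply: le_trans (leeD hX (lexx 1%E)) _; rewrite -EFinD.
- by move=> t _; rewrite lee_fin PsiF_ge0.
- apply/measurable_EFinP.
  apply: (measurable_fun_nondecreasing_comp PsiF_nd) => //.
  exact: measurable_fun_normr_div.
Qed.

Let measurable_excess w : measurable_fun setT (excess w).
Proof.
apply: measurable_maxr; last exact: measurable_cst.
apply: measurable_funB; last exact: measurable_cst.
apply: measurable_bigmax => j; exact: measurableT_comp.
Qed.

Let excess_ge0 w t : 0 <= excess w t.
Proof. by rewrite le_max lexx orbT. Qed.

Lemma integral_PsiL_excess_le c v k : 0 < c -> 0 <= v -> 1 <= k ->
  (forall j, \int[P]_t (PsiF psi (`|Z j t| / c))%:E <= 1)%E ->
  (\int[P]_t (PsiL psi L (excess (c * v) t / (L * (k * c))))%:E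
   <= (4 * m%:R * expR (- psi v) / (L ^+ 2 * k))%:E)%E.
Proof.
move=> c0 v0 k1 HZ; have k0 : 0 < k by lra.
have Lk : 2 <= L ^+ 2 * k by have := L2_gt4; nra.
have Lk0 : 0 < L ^+ 2 * k by lra.
set C := 2 / (L ^+ 2 * k) * expR (- psi v).
have C0 : 0 <= C by rewrite mulr_ge0 ?expR_ge0 // divr_ge0 // ltW.
have Zc0 j t : 0 <= `|Z j t| / c by rewrite divr_ge0 // ltW.
have mg j : measurable_fun setT (fun t => (expR (psi (`|Z j t| / c)))%:E).
  apply/measurable_EFinP.
  apply: (measurable_fun_nondecreasing_comp expR_psi_nd) => //.
  exact: measurable_fun_normr_div.
apply: (@le_trans _ _
  (\int[P]_t (C * \sum_(j < m) expR (psi (`|Z j t| / c)))%:E)%E).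
  apply: ge0_le_integral => //.
  - by move=> t _; rewrite lee_fin PsiL_ge0 // divr_ge0 // !mulr_ge0 ?ltW.
  - apply/measurable_EFinP; apply: (measurable_fun_nondecreasing_comp PsiL_nd).
      by apply: measurable_funM => //; exact: measurable_cst.
    by move=> t; rewrite divr_ge0 // mulr_ge0 ?mulr_ge0 ?ltW.
  - apply/measurable_EFinP; apply: measurable_funM; first exact: measurable_cst.
    by apply: measurable_sum => j; apply/measurable_EFinP; exact: mg.
  - move=> t _; rewrite lee_fin.
    have -> : excess (c * v) t / (L * (k * c)) = excess (c * v) t / c / (L * k).
      by field; rewrite !gt_eqF //.
    have excess_c0 : 0 <= excess (c * v) t / c by rewrite divr_ge0 // ltW.
    apply: le_trans (PsiL_div_le psi0 psi_cvx L_gt0 k1 Lk excess_c0) _.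
    rewrite /C -[leRHS]mulrA; apply: ler_wpM2l.
      by rewrite divr_ge0 // ltW.
    exact: expR_psi_excess_le.
have g0 j t : (0 <= (expR (psi (`|Z j t| / c)))%:E)%E.
  by rewrite lee_fin expR_ge0.
under eq_integral do rewrite EFinM -sumEFin.
rewrite ge0_integralZl_EFin //; last 2 first.
- by move=> t _; rewrite sume_ge0.
- by apply: emeasurable_sum => j; exact: mg.
rewrite ge0_integral_sum //.
apply: (@le_trans _ _ (C%:E * \sum_(j < m) 2%:E)%E).
  apply: lee_wpmul2l; first by rewrite lee_fin.
  by apply: lee_sum => j _; apply: integral_expR_psi_le.
rewrite sumEFin sumr_const card_ord -EFinM lee_fin /C -mulr_natr.
rewrite le_eqVlt; apply/orP; left; apply/eqP; field.
by rewrite !gt_eqF.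
Qed.

Lemma orlicz_norm_excess_le c v k : 0 < c -> 0 <= v -> 1 <= k ->
  (forall j, \int[P]_t (PsiF psi (`|Z j t| / c))%:E <= 1)%E ->
  4 * m%:R * expR (- psi v) <= L ^+ 2 * k ->
  (orlicz_norm P (PsiL psi L) (excess (c * v)) <= (L * (k * c))%:E)%E.
Proof.
move=> c0 v0 k1 HZ cond; apply: orlicz_norm_le.
  by rewrite !mulr_gt0 //; lra.
under eq_integral do rewrite ger0_norm ?excess_ge0 //.
apply: le_trans (integral_PsiL_excess_le c0 v0 k1 HZ) _.
by rewrite lee_fin ler_pdivrMr ?mul1r //; have := L2_gt4; nra.
Qed.

(* When tau = 0 the scale c can be taken arbitrarily small, so the union bound
   over the m variables is paid for by the extra factor k = m. *)
Lemma orlicz_norm_excess0_le e : 0 < e ->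
  (forall j, orlicz_norm P (PsiF psi) (Z j) <= 0)%E ->
  (orlicz_norm P (PsiL psi L) (excess 0) <= e%:E)%E.
Proof.
move=> e0 HZ; have m0 : 0 < m%:R :> R by rewrite ltr0n.
set c := e / (L * m%:R); have c0 : 0 < c by rewrite divr_gt0 ?mulr_gt0.
have -> : e = L * (m%:R * c) by rewrite /c; field; rewrite !gt_eqF.
rewrite -(mulr0 c); apply: orlicz_norm_excess_le; rewrite ?ler1n //.
- move=> j; apply: (integral_PsiF_Z_le1 c0).
  by apply: le_lt_trans (HZ j) _; rewrite lte_fin.
- by rewrite psi0 oppr0 expR0 mulr1 ler_wpM2r // ltW.
Qed.

Hypothesis psi_nz : exists x, 0 <= x /\ psi x != 0.

(* The infimum defining an Orlicz norm need not be attained, so we work at a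
   scale c slightly above t, close enough for psi (t / c * u) to be within
   ln (L^2 / 4) of psi u = ln (1 + m). *)
Lemma orlicz_norm_excess_gt0_le t e : 0 < t -> 0 < e ->
  (forall j, orlicz_norm P (PsiF psi) (Z j) <= t%:E)%E ->
  (orlicz_norm P (PsiL psi L) (excess (t * Psi_inv psi m%:R))
   <= (L * t + e)%:E)%E.
Proof.
move=> t0 e0 HZ.
have [u0 Psi_inv_m] := Psi_invP psi0 psi_ge0 psi_nd psi_cvx psi_nz (ler0n R m).
set u := Psi_inv psi m%:R in u0 Psi_inv_m *.
have δ0 : 0 < ln (L ^+ 2 / 4).
  by rewrite ln_gt0 // ltr_pdivlMr; have := L2_gt4; lra.
have [c /andP[tc cte] near_u] :=
  psi_scale_ge_near1 psi_nd psi_cvx u0 t0 (divr_gt0 e0 L_gt0) δ0.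
have c0 : 0 < c by lra.
have -> : t * u = c * (t / c * u) by field; rewrite gt_eqF.
apply: le_trans (orlicz_norm_excess_le (k := 1) c0 _ _ _ _) _ => //.
- by rewrite mulr_ge0 // divr_ge0 // ltW.
- move=> j; apply: (integral_PsiF_Z_le1 c0).
  by apply: le_lt_trans (HZ j) _; rewrite lte_fin.
- have : expR (- psi (t / c * u)) <= L ^+ 2 / 4 / (1 + m%:R).
    rewrite -Psi_inv_m -[L ^+ 2 / 4]lnK ?posrE; last by have := L2_gt4; lra.
    by rewrite -expRN -expRD ler_expR; lra.
  have m4 : 0 <= 4 * m%:R :> R by apply: mulr_ge0.
  move=> /(ler_wpM2l m4) /le_trans.
  apply; have -> : 4 * m%:R * (L ^+ 2 / 4 / (1 + m%:R)) =
                   L ^+ 2 * (m%:R / (1 + m%:R)).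
    by field; rewrite gt_eqF // ltr_pwDl.
  by rewrite mulr1 ler_piMr ?sqr_ge0 // ler_pdivrMr ?ltr_pwDl //; lra.
- have := ler_wpM2l (ltW L_gt0) cte.
  by rewrite lee_fin mul1r mulrDr [L * (e / L)]mulrC divfK ?gt_eqF.
Qed.

End max_excess.

Unset Implicit Arguments.
Set Strict Implicit.

Theorem lemma20 (R : realType) (d : measure_display) (T : measurableType d)
  (P : probability T R) (psi : R -> R)
  (psi0 : psi 0 = 0)
  (psi_ge0 : forall x : R, 0 <= x -> 0 <= psi x)
  (psi_nd : forall x y : R, 0 <= x -> x <= y -> psi x <= psi y)
  (psi_cvx : forall x y t : R, 0 <= x -> 0 <= y -> 0 <= t <= 1 ->
     psi (t * x + (1 - t) * y) <= t * psi x + (1 - t) * psi y)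
  (psi_nz : exists x : R, 0 <= x /\ psi x != 0)
  (m : nat) (m_gt0 : (0 < m)%N) (Z : 'I_m -> {RV P >-> R})
  (tau_fin : (\big[Order.max/0%E]_(j < m) orlicz_norm P (PsiF psi) (Z j) < +oo)%E) :
  let tau := (\big[Order.max/0%E]_(j < m) orlicz_norm P (PsiF psi) (Z j))%E in
  (orlicz_norm P (PsiL psi (Num.sqrt 6))
     (fun x => Order.max ((\big[Order.max/0]_(j < m) `|Z j x|)
                          - fine tau * Psi_inv psi m%:R)%R 0%R)
   <= (Num.sqrt 6)%:E * tau)%E.
Proof.
cbv zeta; set tau := (\big[Order.max/0%E]_(j < m) _)%E.
have tau_ge0 : (0 <= tau)%E by exact: bigmax_ge_id.
have tauE : tau = (fine tau)%:E by rewrite fineK // ge0_fin_numE.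
have Z_le_tau j : (orlicz_norm P (PsiF psi) (Z j) <= (fine tau)%:E)%E.
  by rewrite -tauE; exact: le_bigmax.
have sqrt6_gt2 : 2 < Num.sqrt 6 :> R.
  have <- : Num.sqrt (2 ^+ 2) = 2 :> R by rewrite sqrtr_sqr ger0_norm.
  by rewrite ltr_sqrt // expr2; lra.
rewrite [X in (_ <= _ * X)%E]tauE -EFinM; apply/lee_addgt0Pr => e e0.
rewrite -EFinD; have := fine_ge0 tau_ge0; rewrite le_eqVlt.
case/predU1P => [tau0|tau_gt0].
- rewrite -tau0 mul0r mulr0 add0r in Z_le_tau *.
  exact (orlicz_norm_excess0_le psi0 psi_ge0 psi_nd psi_cvx m_gt0 sqrt6_gt2 e0
           Z_le_tau).
- exact (orlicz_norm_excess_gt0_le psi0 psi_ge0 psi_nd psi_cvx m_gt0 sqrt6_gt2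
           psi_nz tau_gt0 e0 Z_le_tau).
Qed.
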